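(* Let $n=p_1p_2\cdots p_r$, where $r\geq 3$ and $p_1<p_2<\cdots<p_r$ are prime numbers. Then $$\delta(\mathcal{P}(C_n))=\min\{\deg(p_{r-1}p_r),\ \deg(p_r)\}.$$ Further, $\delta(\mathcal{P}(C_n))=\deg(p_r)$ if and only if $$\phi(p_r)\geq\left(\frac{p_1p_2\cdots p_{r-2}}{\phi(p_1p_2\cdots p_{r-2})}-1\right)\phi(p_{r-1}).$$ In particular, if $\phi(p_r)\geq (r-2)\phi(p_{r-1})$, then $\delta(\mathcal{P}(C_n))=\deg(p_r)$.
   Context: For a finite group $G$, the power graph $\mathcal{P}(G)$ is the simple undirected graph with vertex set $G$ in which two distinct vertices are adjacent if one is an integral power of the other. $C_n$ denotes the cyclic group of order $n$, identified with $\mathbb{Z}_n=\{0,1,\ldots,n-1\}$ (addition mod $n$), so a positive divisor $d$ of $n$ with $d<n$ is regarded as the element $d\in\mathbb{Z}_n$. $\deg(a)$ is the degree of the vertex $a$ in $\mathcal{P}(C_n)$, $\delta(\Gamma)$ is the minimum degree of a graph $\Gamma$, and $\phi$ is Euler's totient function. *)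

From HB Require Import structures.
From mathcomp Require Import all_boot all_order all_algebra all_fingroup.
Set Implicit Arguments. Unset Strict Implicit. Unset Printing Implicit Defensive.

Local Open Scope group_scope.

(* Power graph of a finite group: distinct x, y adjacent iff one is an
   integral power of the other, i.e. x \in <[y]> or y \in <[x]>. *)
Definition pg_adj (gT : finGroupType) (x y : gT) : bool :=
  (x != y) && ((x \in <[y]>) || (y \in <[x]>)).

Definition pg_deg (gT : finGroupType) (x : gT) : nat :=
  #|[set y : gT | pg_adj x y]|.

(* minimum degree of the power graph (initial value #|gT| exceeds every degree) *)
Definition pg_mindeg (gT : finGroupType) : nat :=
  \big[minn/#|gT|]_(x : gT) pg_deg x.

(* 1. Degree formula. In Z_n, y is a power of x iff gcd(x, n) divides y. So for
      g = gcd(x, n) and d = n / g (coprime to g, n being squarefree), the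
      neighbours of x are the multiples of g and the residues coprime to d, and
      counting residues gives deg(x) = g phi(d) + d - phi(d) - 1 (pg_deg_Zp).
   2. Rearrangement. If d is a product of j of the primes, replacing them by
      the j smallest ones decreases this value (prefix_prodp_min), so every
      degree is bounded below by some cdeg j, the degree of the vertex
      p_j ... p_(r-1) (cdeg_le_divisor, pg_deg_suf_prod).
   3. Monotonicity. cdeg decreases on [0, r - 2] and cdeg (r - 1) <= cdeg r
      (cdeg_step, cdeg_last); hence the minimum degree is that of p_(r-2) p_(r-1)
      or of p_(r-1) (pg_mindeg_Zp).
   4. Comparing these two degrees gives the criterion, cleared of denominators
      in rat_ratio_leE; the bound m / phi(m) <= r - 1 for m = p_0 ... p_(r-3)
      yields the sufficient condition (last_pair_sufficient). *)

From HB Require Import structures.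
From mathcomp Require Import all_boot all_order all_algebra all_fingroup.
From mathcomp Require Import zify ring.
Set Implicit Arguments. Unset Strict Implicit. Unset Printing Implicit Defensive.

Lemma count_iota_periodic (P : pred nat) t c :
  (forall y, P (y + t) = P y) ->
  count P (iota 0 (c * t)) = c * count P (iota 0 t).
Proof.
move=> Pt; elim: c => [|c IHc]; first by rewrite !mul0n.
rewrite mulSn addnC iotaD count_cat IHc add0n mulSn addnC.
congr (_ + _); rewrite -{1}[c * t]addn0 iotaDl count_map.
apply: eq_count => y /=; elim: c {IHc} => [|c IHc]; first by rewrite add0n.
by rewrite (_ : c.+1 * t + y = c * t + y + t) ?Pt //; lia.
Qed.

Lemma totient_count d : totient d = count (coprime ^~ d) (iota 0 d).
Proof.
rewrite totient_count_coprime -sum1_count [RHS]big_mkcond /index_iota subn0.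
by apply: eq_bigr => z _; rewrite coprime_sym; case: coprime.
Qed.

Lemma multiples_iota g d : 0 < g ->
  filter (dvdn g) (iota 0 (g * d)) = map (muln^~ g) (iota 0 d).
Proof.
move=> g_gt0; elim: d => [|d IHd]; first by rewrite muln0.
rewrite mulnS addnC iotaD filter_cat IHd add0n -addn1 iotaD map_cat /= add0n.
congr (_ ++ _); rewrite -[X in iota _ X]prednK //= dvdn_mulr // mulnC; congr (_ :: _).
apply/eqP; rewrite -[_ == _]negbK -has_filter; apply/hasPn => z.
rewrite mem_iota => /andP [lo hi]; apply/negP => /dvdnP [q def_z]; subst z.
move: lo hi; rewrite ltn_pmul2r // => lt_dq; rewrite -[g]prednK //; nia.
Qed.

Lemma count_coprime_iota g d :
  count (coprime ^~ d) (iota 0 (g * d)) = g * totient d.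
Proof.
rewrite count_iota_periodic ?totient_count // => y.
by rewrite -coprime_modl modnDr coprime_modl.
Qed.

Lemma count_dvdn_iota g d : 0 < g -> count (dvdn g) (iota 0 (g * d)) = d.
Proof. by move=> g_gt0; rewrite -size_filter multiples_iota // size_map size_iota. Qed.

Lemma count_coprime_dvdn_iota g d : coprime g d -> 0 < g ->
  count (predI (coprime ^~ d) (dvdn g)) (iota 0 (g * d)) = totient d.
Proof.
move=> co_gd g_gt0; rewrite -count_filter multiples_iota // count_map totient_count.
by apply: eq_count => z; rewrite /= coprimeMl co_gd andbT.
Qed.

Lemma card_ord_count m (P : pred nat) :
  #|[set y : 'I_m | P (val y)]| = count P (iota 0 m).
Proof.
rewrite cardsE cardE -(val_enum_ord m) count_map.
by rewrite /enum_mem size_filter filter_predT.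
Qed.

Lemma gcdn_dvd_cofactor y g d : coprime g d -> (gcdn y (g * d) %| g) = coprime y d.
Proof.
move=> co_gd; apply/idP/idP => [dvd_g | co_yd].
  rewrite /coprime -dvdn1 -(eqP co_gd) dvdn_gcd (dvdn_trans _ dvd_g) ?dvdn_gcdr //.
  by rewrite dvdn_gcd dvdn_gcdl (dvdn_trans (dvdn_gcdr y d)) // dvdn_mull.
have: coprime (gcdn y (g * d)) d by apply: coprime_dvdl co_yd; apply: dvdn_gcdl.
by move/Gauss_dvdl <-; apply: dvdn_gcdr.
Qed.

Section PowerGraphZp.

Variable k : nat.
Local Notation n := k.+2.

Lemma Zp_mem_cycle (x y : 'Z_n) : (x \in <[y]>%g) = (gcdn y n %| x).
Proof.
set g := gcdn y n; apply/cycleP/idP => [[i ->] | /dvdnP [t def_x]].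
  rewrite Zp_expg /= -(dvdn_addl _ (dvdn_mull ((y * i) %/ n) (dvdn_gcdr y n))).
  by rewrite addnC -divn_eq dvdn_mulr // dvdn_gcdl.
(* Bezout: a y = -g (mod n), hence y (a t (n - 1)) = g t = x (mod n). *)
have [a _ /dvdnP [c def_g]] := Bezoutr y (isT : 0 < n).
exists (a * t * (n - 1)); apply: val_inj; rewrite Zp_expg /=.
rewrite -[val x](modn_small (ltn_ord x)); apply/eqP; rewrite -(eqn_modDr (g * t * (n - 1))).
have -> : y * (a * t * (n - 1)) + g * t * (n - 1) = c * t * (n - 1) * n.
  transitivity ((g + a * y) * (t * (n - 1))); first by ring.
  by rewrite def_g; ring.
have -> : x + g * t * (n - 1) = g * t * n by rewrite def_x; lia.
by rewrite !modnMl.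
Qed.

Variables (x : 'Z_n) (g d : nat).
Hypotheses (def_g : g = gcdn x n) (def_n : g * d = n) (co_gd : coprime g d).

(* The neighbours of x: the multiples of g (the powers of x) and the residues
   coprime to d (the elements having x as a power), x itself excluded. *)
Lemma pg_nbhd_Zp :
  [set y : 'Z_n | pg_adj x y] = [set y : 'Z_n | coprime y d || (g %| y)] :\ x.
Proof.
apply/setP => y; rewrite !inE /pg_adj !Zp_mem_cycle -def_g eq_sym; congr (_ && (_ || _)).
by rewrite -(gcdn_dvd_cofactor y co_gd) def_n def_g dvdn_gcd dvdn_gcdr andbT.
Qed.

Lemma pg_deg_Zp : pg_deg x = (g * totient d + d - totient d).-1.
Proof.
have g_gt0 : 0 < g by rewrite def_g gcdn_gt0 orbT.
have x_in : x \in [set y : 'Z_n | coprime y d || (g %| y)].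
  by rewrite inE def_g dvdn_gcdl orbT.
have card_nbhd := cardsD1 x [set y : 'Z_n | coprime y d || (g %| y)].
rewrite x_in add1n (card_ord_count n (predU (coprime ^~ d) (dvdn g))) in card_nbhd.
have union := count_predUI (coprime ^~ d) (dvdn g) (iota 0 (g * d)).
rewrite count_coprime_iota count_dvdn_iota // count_coprime_dvdn_iota // def_n in union.
rewrite /pg_deg pg_nbhd_Zp -[#|_|]/(#|_|.+1.-1) -card_nbhd; congr _.-1; lia.
Qed.

End PowerGraphZp.

Lemma pg_mindeg_le (gT : finGroupType) (x : gT) : pg_mindeg gT <= pg_deg x.
Proof.
rewrite /pg_mindeg; have : x \in index_enum gT by rewrite mem_index_enum.
elim: (index_enum gT) => [//|y s IHs]; rewrite in_cons big_cons.
case/orP => [/eqP <- | /IHs le_x]; first exact: geq_minl.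
exact: leq_trans (geq_minr _ _) le_x.
Qed.

Lemma pg_mindeg_ge (gT : finGroupType) L :
  (forall x : gT, L <= pg_deg x) -> L <= pg_mindeg gT.
Proof.
move=> L_le; apply: (big_ind (fun v => L <= v)) => [|u v Lu Lv|x _].
- exact: leq_trans (L_le 1%g) (max_card _).
- by rewrite leq_min Lu Lv.
- exact: L_le.
Qed.

Section IncreasingPrimes.

Variables (r : nat) (p : nat -> nat).
Hypothesis p_prime : forall i, i < r -> prime (p i).
Hypothesis p_incr : forall i, i.+1 < r -> p i < p i.+1.

Local Notation prodp l := (\prod_(j <- l) p j).
Local Notation prodq l := (\prod_(j <- l) (p j).-1).
Local Notation bounded l := (all (fun j => j < r) l).

Lemma p_ltn i j : i < j -> j < r -> p i < p j.
Proof.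
elim: j => // j IHj; rewrite ltnS leq_eqVlt => /orP [/eqP -> | lt_ij] lt_jr.
  exact: p_incr.
by apply: ltn_trans (p_incr lt_jr); apply: IHj => //; apply: ltnW.
Qed.

Lemma p_leq i j : i <= j -> j < r -> p i <= p j.
Proof. by rewrite leq_eqVlt => /orP [/eqP -> // | lt_ij] /(p_ltn lt_ij)/ltnW. Qed.

Lemma p_inj i j : i < r -> j < r -> p i = p j -> i = j.
Proof.
move=> lt_ir lt_jr eq_p; case: (ltngtP i j) => // [lt_ij | lt_ji].
  by have := p_ltn lt_ij lt_jr; rewrite eq_p ltnn.
by have := p_ltn lt_ji lt_ir; rewrite eq_p ltnn.
Qed.

Lemma p_lower i : i < r -> i.+2 <= p i.
Proof.
elim: i => [|i IHi] lt_ir; first exact/prime_gt1/p_prime.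
by have := IHi (ltnW lt_ir); have := p_incr lt_ir; lia.
Qed.

Lemma prodp_gt0 l : bounded l -> 0 < prodp l.
Proof.
move=> l_bnd; rewrite big_seq; apply: prodn_cond_gt0 => j /(allP l_bnd) lt_jr.
by have := p_lower lt_jr; lia.
Qed.

Lemma p_ndvd_prodp i l : i < r -> i \notin l -> bounded l -> ~~ (p i %| prodp l).
Proof.
move=> lt_ir; elim: l => [|a l IHl] /=.
  by rewrite big_nil dvdn1; have := prime_gt1 (p_prime lt_ir); lia.
rewrite in_cons negb_or => /andP [ne_ia il] /andP [lt_ar l_bnd].
rewrite big_cons Euclid_dvdM ?p_prime // (negbTE (IHl il l_bnd)) orbF.
rewrite dvdn_prime2 ?p_prime //; apply: contra ne_ia => /eqP eq_p.
by apply/eqP; apply: p_inj.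
Qed.

Lemma totient_prodp l : uniq l -> bounded l -> totient (prodp l) = prodq l.
Proof.
elim: l => [|a l IHl] /=; first by rewrite !big_nil.
move=> /andP [al ul] /andP [lt_ar l_bnd]; rewrite !big_cons totient_coprime.
  by rewrite IHl // totient_prime ?p_prime.
by rewrite prime_coprime ?p_prime ?p_ndvd_prodp.
Qed.

Lemma prime_dvd_prodp q l : prime q -> bounded l -> q %| prodp l ->
  exists2 j, j \in l & q = p j.
Proof.
move=> q_pr; elim: l => [|a l IHl] /=.
  by rewrite big_nil dvdn1 => _ /eqP q1; rewrite q1 in q_pr.
move=> /andP [lt_ar l_bnd]; rewrite big_cons Euclid_dvdM // => /orP [q_pa | q_l].
  by exists a; rewrite ?mem_head //; apply/eqP; rewrite -dvdn_prime2 ?p_prime.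
by have [j jl ->] := IHl l_bnd q_l; exists j; rewrite // in_cons jl orbT.
Qed.

Lemma sq_ndvd_prodp j l : uniq l -> bounded l -> j \in l -> ~~ (p j * p j %| prodp l).
Proof.
move=> ul l_bnd jl; have lt_jr := allP l_bnd j jl.
rewrite (perm_big _ (perm_to_rem jl)) big_cons dvdn_pmul2l ?prime_gt0 ?p_prime //.
rewrite p_ndvd_prodp ?mem_rem_uniqF //.
by apply/allP => i /mem_rem /(allP l_bnd).
Qed.

Lemma coprime_prodp_factors g d l : uniq l -> bounded l -> g * d = prodp l ->
  coprime g d.
Proof.
move=> ul l_bnd def_gd; have := prodp_gt0 l_bnd; rewrite -def_gd muln_gt0.
case/andP => g_gt0 d_gt0; apply: contraT => nco.
have gcd_gt1 : 1 < gcdn g d by have := gcdn_gt0 g d; rewrite g_gt0 /coprime in nco *; lia.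
set q := pdiv (gcdn g d); have q_pr : prime q := pdiv_prime gcd_gt1.
have q_g : q %| g := dvdn_trans (pdiv_dvd _) (dvdn_gcdl _ _).
have q_d : q %| d := dvdn_trans (pdiv_dvd _) (dvdn_gcdr _ _).
have q_l : q %| prodp l by rewrite -def_gd dvdn_mulr.
have [j jl def_q] := prime_dvd_prodp q_pr l_bnd q_l.
by have := sq_ndvd_prodp ul l_bnd jl; rewrite -def_gd -def_q dvdn_mul.
Qed.

Lemma dvdn_prodp d l : uniq l -> bounded l -> d %| prodp l ->
  d = prodp [seq j <- l | p j %| d].
Proof.
elim: l d => [|a l IHl] d /=; first by rewrite !big_nil dvdn1 => _ _ /eqP.
move=> /andP [al ul] /andP [lt_ar l_bnd]; rewrite big_cons => d_dvd.
have pa_pr := p_prime lt_ar.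
case: ifP => [/dvdnP [d' def_d] | pa_nd]; last first.
  by apply: IHl; rewrite // -(@Gauss_dvdr d (p a)) // coprime_sym prime_coprime ?pa_nd.
have d'_dvd : d' %| prodp l.
  by rewrite -(@dvdn_pmul2l (p a)) ?prime_gt0 // mulnC -def_d.
rewrite big_cons {1}def_d {1}(IHl d' ul l_bnd d'_dvd) mulnC; congr (_ * _).
congr (\prod_(j <- _) _); apply: eq_in_filter => j jl; have lt_jr := allP l_bnd j jl.
rewrite def_d Euclid_dvdM ?p_prime // (dvdn_prime2 (p_prime lt_jr) pa_pr).
suff -> : (p j == p a) = false by rewrite orbF.
by apply/eqP => /(p_inj lt_jr lt_ar) eq_ja; rewrite -eq_ja jl in al.
Qed.

Lemma prodq_le_prodp l : prodq l <= prodp l.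
Proof. by apply: leq_prod => j _; apply: leq_pred. Qed.

(* Rearrangement: among sets of k primes of the sequence, all at least p k0,
   the k smallest ones (p k0, ..., p (k0 + k - 1)) minimise both m - phi(m)
   and phi(m) / m. *)
Lemma prefix_prodp_min s k0 : sorted ltn s -> all (fun i => k0 <= i < r) s ->
  let A := prodp s in let A1 := prodq s in
  let B := prodp (iota k0 (size s)) in let B1 := prodq (iota k0 (size s)) in
  [/\ B - B1 <= A - A1, B <= A & B1 * A <= A1 * B].
Proof.
elim: s k0 => [|i s IHs] k0 /=; first by rewrite !big_nil.
rewrite (path_sortedE ltn_trans) => /andP [i_lt_s s_sorted] /andP [/andP [le_k0i lt_ir] s_rng].
have s_rng' : all (fun j => k0.+1 <= j < r) s.
  apply/allP => j js; have := allP i_lt_s j js; have := allP s_rng j js.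
  by rewrite /=; lia.
have [subB leB ratioB] := IHs k0.+1 s_sorted s_rng'.
have A1A := prodq_le_prodp s; have B1B := prodq_le_prodp (iota k0.+1 (size s)).
rewrite !big_cons; move: subB leB ratioB A1A B1B.
set A := prodp s; set A1 := prodq s.
set B := prodp (iota _ _); set B1 := prodq (iota _ _) => subB leB ratioB A1A B1B.
have le_p := p_leq le_k0i lt_ir; have p_ge2 := p_lower (leq_ltn_trans le_k0i lt_ir).
move: le_p p_ge2; set x := p i; set y := p k0 => le_yx y_ge2.
have ratio_xy : y.-1 * x <= x.-1 * y by nia.
split; [nia | exact: leq_mul |].
by have := leq_mul ratio_xy ratioB; nia.
Qed.

Definition pre_prod j := prodp (iota 0 j).
Definition pre_phi j := prodq (iota 0 j).
Definition suf_prod j := prodp (iota j (r - j)).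

(* The vertex suf_prod j of C_(pre_prod r) has closed neighbourhood of size
   cdeg j (degree formula with g = suf_prod j, d = pre_prod j). *)
Definition cdeg j := suf_prod j * pre_phi j + pre_prod j - pre_phi j.

Lemma pre_prodS j : pre_prod j.+1 = pre_prod j * p j.
Proof. by rewrite /pre_prod -[j.+1]addn1 iotaD big_cat big_seq1. Qed.

Lemma pre_phiS j : pre_phi j.+1 = pre_phi j * (p j).-1.
Proof. by rewrite /pre_phi -[j.+1]addn1 iotaD big_cat big_seq1. Qed.

Lemma suf_prodS j : j < r -> suf_prod j = p j * suf_prod j.+1.
Proof. by move=> lt_jr; rewrite /suf_prod -[r - j](subnSK lt_jr) big_cons. Qed.

Lemma suf_prod_r : suf_prod r = 1.
Proof. by rewrite /suf_prod subnn big_nil. Qed.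

Lemma pre_suf_prod j : j <= r -> pre_prod j * suf_prod j = pre_prod r.
Proof.
by move=> le_jr; rewrite /pre_prod /suf_prod -big_cat -[in RHS](subnKC le_jr) iotaD.
Qed.

Lemma pre_phi_le j : pre_phi j <= pre_prod j.
Proof. exact: prodq_le_prodp. Qed.

Lemma pre_phi_gt0 j : j <= r -> 0 < pre_phi j.
Proof.
elim: j => [|j IHj] lt_jr; first by rewrite /pre_phi big_nil.
by rewrite pre_phiS muln_gt0 IHj ?(ltnW lt_jr) //=; have := p_lower lt_jr; lia.
Qed.

Lemma suf_prod_gt0 j : 0 < suf_prod j.
Proof. by apply: prodp_gt0; apply/allP => i; rewrite mem_iota; lia. Qed.

Lemma totient_pre_prod j : j <= r -> totient (pre_prod j) = pre_phi j.
Proof.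
move=> le_jr; rewrite totient_prodp ?iota_uniq //.
by apply/allP => i; rewrite mem_iota; lia.
Qed.

(* m / phi(m) <= j + 1 for the product m of the j smallest primes, since the
   i-th prime is at least i + 2. *)
Lemma pre_prod_le j : j <= r -> pre_prod j <= j.+1 * pre_phi j.
Proof.
elim: j => [|j IHj] lt_jr; first by rewrite /pre_prod /pre_phi !big_nil.
have := IHj (ltnW lt_jr); have := p_lower lt_jr; rewrite pre_prodS pre_phiS.
set q := p j => q_ge le_pre; rewrite -(leq_pmul2r (ltn0Sn j)).
have : q * j.+1 <= j.+2 * q.-1 by nia.
by move/(leq_mul le_pre); nia.
Qed.

(* Every vertex of C_(pre_prod r) has closed neighbourhood at least as large
   as one of the vertices suf_prod j: replace the cofactor d = n / gcd(x, n)
   by the product of equally many smallest primes. *)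
Lemma cdeg_le_divisor g d : g * d = pre_prod r ->
  exists2 j, j <= r & cdeg j <= g * totient d + d - totient d.
Proof.
move=> def_n; have r_bnd : bounded (iota 0 r) by apply/allP => i; rewrite mem_iota.
have d_dvd : d %| prodp (iota 0 r) by rewrite -[prodp _]def_n dvdn_mull.
set s := [seq j <- iota 0 r | p j %| d].
have def_d : d = prodp s := dvdn_prodp (iota_uniq 0 r) r_bnd d_dvd.
have s_uniq : uniq s by rewrite filter_uniq ?iota_uniq.
have s_rng : all (fun i => 0 <= i < r) s.
  by apply/allP => i; rewrite mem_filter mem_iota /=; lia.
have s_bnd : bounded s by apply: sub_all s_rng => i /andP [].
have phi_d : totient d = prodq s by rewrite def_d totient_prodp.
have s_sorted : sorted ltn s.
  by apply: sorted_filter; [exact: ltn_trans | exact: iota_ltn_sorted].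
have [subB _ ratioB] := prefix_prodp_min s_sorted s_rng.
have le_sr : size s <= r by rewrite size_filter -[leqRHS](size_iota 0 r) count_size.
exists (size s) => //; rewrite /cdeg phi_d.
rewrite -def_d -/(pre_prod (size s)) -/(pre_phi (size s)) in subB ratioB.
have def_gd := pre_suf_prod le_sr; rewrite -def_n in def_gd.
have A1A : prodq s <= d by rewrite def_d prodq_le_prodp.
have B1B := pre_phi_le (size s).
have d_gt0 : 0 < d by rewrite def_d prodp_gt0.
have : suf_prod (size s) * pre_phi (size s) <= g * prodq s.
  by rewrite -(leq_pmul2r d_gt0); have := leq_mul (leqnn (suf_prod (size s))) ratioB; nia.
lia.
Qed.

(* Moving one more small prime from g to d never increases the closed
   neighbourhood, as long as at least two primes remain in g. *)
Lemma cdeg_step j : j.+3 <= r -> cdeg j.+1 <= cdeg j.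
Proof.
move=> le_jr; have lt_jr : j < r by lia.
have le_suf : j.+1 * (p j).-1 <= suf_prod j.+1.
  have -> : suf_prod j.+1 = p j.+1 * (p j.+2 * suf_prod j.+3).
    by rewrite (@suf_prodS j.+1) ?(@suf_prodS j.+2); lia.
  apply: leq_mul; first by have := @p_lower j.+1; lia.
  have := @p_ltn j j.+2; have := suf_prod_gt0 j.+3; nia.
have le_pre := pre_prod_le (ltnW lt_jr); have phi_le := pre_phi_le j.
have q_ge := p_lower lt_jr.
rewrite /cdeg pre_prodS pre_phiS (suf_prodS lt_jr).
move: le_suf le_pre phi_le q_ge.
set G := suf_prod j.+1; set D := pre_prod j; set T := pre_phi j; set q := p j.
move=> le_suf le_pre phi_le q_ge.
have : D * q.-1 <= T * G.
  by have := leq_mul le_pre (leqnn q.-1); have := leq_mul (leqnn T) le_suf; nia.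
have q_pos : q = q.-1.+1 by lia.
rewrite [in D * q]q_pos [in q * G]q_pos; move: q.-1 => q'.
nia.
Qed.

(* Moving the last prime into d does not decrease it either. *)
Lemma cdeg_last j : j.+1 = r -> cdeg j <= cdeg j.+1.
Proof.
move=> def_r; have lt_jr : j < r by rewrite -def_r.
rewrite /cdeg pre_prodS pre_phiS (suf_prodS lt_jr) def_r suf_prod_r.
have := pre_phi_le j; have := p_lower lt_jr; nia.
Qed.

Lemma cdeg_chain i j : i <= j -> j.+2 <= r -> cdeg j <= cdeg i.
Proof.
elim: j => [|j IHj]; first by rewrite leqn0 => /eqP ->.
rewrite leq_eqVlt => /orP [/eqP -> // | lt_ij] le_jr.
exact: leq_trans (cdeg_step le_jr) (IHj lt_ij (ltnW le_jr)).
Qed.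

Lemma cdeg_min j : 3 <= r -> j <= r -> minn (cdeg r.-2) (cdeg r.-1) <= cdeg j.
Proof.
move=> r_ge3 le_jr; rewrite geq_min; case: (leqP j r.-2) => [le_j | lt_j].
  by rewrite cdeg_chain //; lia.
have [-> | ->] : j = r.-1 \/ j = r by lia.
  by rewrite leqnn orbT.
apply/orP; right; rewrite -[in cdeg r](ltn_predK r_ge3); apply: cdeg_last; lia.
Qed.

(* Degrees are cdeg j - 1; cdeg j > 0 lets us compare degrees via cdeg. *)
Lemma cdeg_gt0 j : j <= r -> 0 < cdeg j.
Proof.
move=> le_jr; have := suf_prod_gt0 j; have := pre_phi_le j.
have : 0 < pre_prod j by apply: prodp_gt0; apply/allP => i; rewrite mem_iota; lia.
rewrite /cdeg; nia.
Qed.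

Lemma suf_prod_last : 0 < r -> suf_prod r.-1 = p r.-1.
Proof.
by move=> r_gt0; rewrite suf_prodS ?(ltn_predK r_gt0) ?suf_prod_r ?muln1 // ltn_predL.
Qed.

Lemma suf_prod_last2 : 1 < r -> suf_prod r.-2 = p r.-2 * p r.-1.
Proof.
move=> r_gt1; rewrite suf_prodS; last by lia.
by rewrite (_ : r.-2.+1 = r.-1) ?suf_prod_last //; lia.
Qed.

(* n >= 2, so that Z_n is a genuine cyclic group of order n. *)
Lemma pre_prod_gt1 : 0 < r -> 1 < pre_prod r.
Proof.
move=> r_gt0; rewrite -(pre_suf_prod r_gt0) -[1]/(0.+1) pre_prodS /pre_prod big_nil mul1n.
by have := p_lower r_gt0; have := suf_prod_gt0 1; nia.
Qed.

Lemma cdeg_last_pair : 2 <= r ->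
  (cdeg r.-1 <= cdeg r.-2) =
  (pre_prod r.-2 * (p r.-2).-1 <= pre_phi r.-2 * ((p r.-1).-1 + (p r.-2).-1)).
Proof.
move=> r_ge2; have def_r1 : r.-1 = r.-2.+1 by lia.
have lt_r2 : r.-2 < r by lia.
have lt_r1 : r.-1 < r by lia.
rewrite /cdeg def_r1 pre_prodS pre_phiS (suf_prodS lt_r2) -def_r1 (suf_prodS lt_r1).
rewrite (ltn_predK r_ge2) suf_prod_r muln1.
have := pre_phi_gt0 (ltnW lt_r2); have := pre_phi_le r.-2.
have := p_lower lt_r2; have := p_lower lt_r1.
move: (pre_prod _) (pre_phi _) (p r.-2) (p r.-1) => D T [|[|P]] [|[|Q]] //= _ _ le_TD T_gt0.
by apply/idP/idP; nia.
Qed.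

(* A sufficient condition for this comparison: (r - 2) phi(P) <= phi(Q),
   because m / phi(m) <= r - 1. *)
Lemma last_pair_sufficient : 2 <= r -> (r - 2) * (p r.-2).-1 <= (p r.-1).-1 ->
  pre_prod r.-2 * (p r.-2).-1 <= pre_phi r.-2 * ((p r.-1).-1 + (p r.-2).-1).
Proof.
move=> r_ge2 le_phi.
have le_pre : pre_prod r.-2 <= r.-2.+1 * pre_phi r.-2 by apply: pre_prod_le; lia.
rewrite (_ : r - 2 = r.-2) in le_phi; last by lia.
have := leq_mul le_pre (leqnn (p r.-2).-1); nia.
Qed.

Lemma pg_deg_suf_prod k j : pre_prod r = k.+2 -> j <= r ->
  pg_deg (inZp (suf_prod j) : 'Z_k.+2) = (cdeg j).-1.
Proof.
move=> def_n le_jr; have def_gd := pre_suf_prod le_jr.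
rewrite def_n mulnC in def_gd.
have r_bnd : bounded (iota 0 r) by apply/allP => i; rewrite mem_iota.
rewrite (@pg_deg_Zp k _ (suf_prod j) (pre_prod j)) // ?totient_pre_prod //.
  by rewrite /= gcdn_modl; apply/esym/gcdn_idPl; rewrite -def_gd dvdn_mulr.
by apply: (coprime_prodp_factors (iota_uniq 0 r) r_bnd); rewrite def_gd.
Qed.

Lemma pg_deg_Zp_ge k (x : 'Z_k.+2) : pre_prod r = k.+2 -> 3 <= r ->
  (minn (cdeg r.-2) (cdeg r.-1)).-1 <= pg_deg x.
Proof.
move=> def_n r_ge3; set g := gcdn x k.+2; set d := k.+2 %/ g.
have def_gd : g * d = k.+2 by rewrite mulnC divnK ?dvdn_gcdr.
have r_bnd : bounded (iota 0 r) by apply/allP => i; rewrite mem_iota.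
have co_gd : coprime g d.
  by apply: (coprime_prodp_factors (iota_uniq 0 r) r_bnd); rewrite def_gd.
rewrite (pg_deg_Zp (erefl g) def_gd co_gd).
have [j le_jr le_cdeg] := cdeg_le_divisor (etrans def_gd (esym def_n)).
by have := leq_trans (cdeg_min r_ge3 le_jr) le_cdeg; lia.
Qed.

Lemma pg_mindeg_Zp k : pre_prod r = k.+2 -> 3 <= r ->
  pg_mindeg 'Z_k.+2 = minn (pg_deg (inZp (p r.-2 * p r.-1) : 'Z_k.+2))
                           (pg_deg (inZp (p r.-1) : 'Z_k.+2)).
Proof.
move=> def_n r_ge3; apply/eqP; rewrite eqn_leq leq_min !pg_mindeg_le /=.
rewrite -suf_prod_last2 -?suf_prod_last; try lia.
apply: pg_mindeg_ge => x; rewrite !pg_deg_suf_prod //; try lia.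
by apply: leq_trans (pg_deg_Zp_ge x def_n r_ge3); lia.
Qed.

Lemma pg_deg_Zp_last_pair k : pre_prod r = k.+2 -> 3 <= r ->
  (pg_deg (inZp (p r.-1) : 'Z_k.+2) <= pg_deg (inZp (p r.-2 * p r.-1) : 'Z_k.+2))
  = (pre_prod r.-2 * (p r.-2).-1 <= pre_phi r.-2 * ((p r.-1).-1 + (p r.-2).-1)).
Proof.
move=> def_n r_ge3; rewrite -cdeg_last_pair -?suf_prod_last2 -?suf_prod_last; try lia.
rewrite !pg_deg_suf_prod //; try lia.
by have := @cdeg_gt0 r.-1; have := @cdeg_gt0 r.-2; lia.
Qed.

End IncreasingPrimes.

Lemma pre_prod_ord (p : nat -> nat) j : pre_prod p j = \prod_(i < j) p i.
Proof. by rewrite /pre_prod -(big_mkord xpredT) /index_iota subn0. Qed.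

Lemma rat_ratio_leE (a b m t : nat) : 0 < t ->
  ((m%:R / t%:R - 1) * b%:R <= a%:R :> rat)%R = (m * b <= t * (a + b)).
Proof.
move=> t_gt0; have t_pos : (0 < t%:R :> rat)%R by rewrite Num.Theory.ltr0n.
rewrite GRing.mulrBl GRing.mul1r Num.Theory.lerBlDr GRing.mulrAC.
rewrite Num.Theory.ler_pdivrMr // -GRing.natrM -GRing.natrD -GRing.natrM.
by rewrite Num.Theory.ler_nat (mulnC t).
Qed.

Theorem theorem1p2 (r : nat) (p : nat -> nat) (n : nat) :
  3 <= r ->
  (forall i, i < r -> prime (p i)) ->
  (forall i, i.+1 < r -> p i < p i.+1) ->
  n = \prod_(i < r) p i ->
  let m := \prod_(i < r.-2) p i in
  [/\ pg_mindeg 'Z_n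
        = minn (pg_deg (inZp (p r.-2 * p r.-1) : 'Z_n)) (pg_deg (inZp (p r.-1) : 'Z_n)),
      pg_mindeg 'Z_n = pg_deg (inZp (p r.-1) : 'Z_n) <->
        ((totient (p r.-1))%:R >=
           ((m%:R / (totient m)%:R) - 1) * (totient (p r.-2))%:R :> rat)%R
    & (r - 2) * totient (p r.-2) <= totient (p r.-1) ->
        pg_mindeg 'Z_n = pg_deg (inZp (p r.-1) : 'Z_n)].
Proof.
move=> r_ge3 p_prime p_incr def_n m.
have [k def_k] : exists k, pre_prod p r = k.+2.
  by exists (pre_prod p r).-2; have := pre_prod_gt1 p_prime p_incr (ltnW (ltnW r_ge3)); lia.
have -> : n = k.+2 by rewrite def_n -pre_prod_ord.
have def_m : m = pre_prod p r.-2 by rewrite pre_prod_ord.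
have phi_m : totient m = pre_phi p r.-2.
  by rewrite def_m (totient_pre_prod p_prime p_incr) //; lia.
have phi_m_gt0 : 0 < totient m by rewrite phi_m (pre_phi_gt0 p_prime p_incr) //; lia.
have mindeg := pg_mindeg_Zp p_prime p_incr def_k r_ge3.
have last_pair := pg_deg_Zp_last_pair p_prime p_incr def_k r_ge3.
have [lt_r2 lt_r1] : r.-2 < r /\ r.-1 < r by lia.
rewrite (totient_prime (p_prime _ lt_r1)) (totient_prime (p_prime _ lt_r2)).
split=> [// | | le_phi]; rewrite mindeg.
- rewrite rat_ratio_leE // phi_m def_m -last_pair.
  by split=> /minn_idPr.
- by apply/minn_idPr; rewrite last_pair last_pair_sufficient //; lia.
Qed.
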